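(* Consider the Double TFM with all transactions of common size $s>0$, history $H$ with burning fee $r$, and a set $M_0$ of user transactions with $|M_0|=w>c_{block}$ (congestion). Suppose all includers and the block producer follow the indicated allocation rules and add no fake transactions, and let $B_k$ be the resulting block. Then for every transaction $t\in M_0\setminus B_k$ there exists a bid $b_t$ for $t$ such that, when $b_t$ replaces the original bid of $t$ and all other transactions and bids are unchanged, and all includers and the block producer follow the indicated allocation rules without fake transactions, $t$ is included in at least one inclusion list and in the block.
   Context: Model: in one slot there are users, $m$ includers with distinct orders $1,\dots,m$ (order $1$ is best), and one block producer. Each transaction has size $s$. An includer chooses an inclusion list (at most $c_{Incl}$ transactions) and the block producer, seeing the lists, builds a block (at most $c_{block}$ transactions). Every transaction in the block pays burning fee $r s$. The block producer incurs cost $\mu^{Cost}_{BP}\ge0$ per unit of size per user transaction in its block; each includer incurs cost $\mu^{Cost}_{CM}\ge0$ per unit of size per user transaction in its list. Double TFM: a bid is $b_t=(\delta^{CM}_t,\delta^{BP}_t,c_t)$ with all entries nonnegative reals. The block producer fee of $t$ is $\max\{\min\{\delta^{BP}_t s,\ c_t s-rs\},0\}$ (paid to the block producer when $t$ is in the block); the committee fee is $\max\{\min\{\delta^{CM}_t s,\ c_t s-rs-\min\{\delta^{BP}_t s, c_t s-rs\}\},0\}$ (paid to the smallest-order includer that listed $t$, only if $t$ is in the block). Indicated allocation rules. Block producer: among transactions with $c_t\ge r+\mu^{Cost}_{BP}$ and $\delta^{BP}_t\ge \mu^{Cost}_{BP}$, include those with the highest block producer fee (deterministic tie-breaking) until the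 block is full or none remain. Includer of order $j$: compute the set $S$ of transactions the block producer following its rule would include; discard from $S$ those with committee fee below $\mu^{Cost}_{CM} s$; sort the rest by committee fee decreasingly (deterministic tie-breaking); includer $j$ includes the transactions in positions $(j-1)c_{Incl}+1,\dots,jc_{Incl}$ of this sorted list (if present). *)

From HB Require Import structures.
From mathcomp Require Import all_boot all_order all_algebra.
From mathcomp Require Import reals.
Set Implicit Arguments. Unset Strict Implicit. Unset Printing Implicit Defensive.
Import Order.TTheory GRing.Theory Num.Theory.
Local Open Scope ring_scope.

Record bid (R : realType) := Bid { dCM : R; dBP : R; cap : R }.

Definition valid_bid (R : realType) (b : bid R) : Prop :=
  0 <= dCM b /\ 0 <= dBP b /\ 0 <= cap b.

Definition bp_fee (R : realType) (r s : R) (b : bid R) : R :=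
  Num.max (Num.min (dBP b * s) (cap b * s - r * s)) 0.

Definition cm_fee (R : realType) (r s : R) (b : bid R) : R :=
  Num.max (Num.min (dCM b * s)
                   (cap b * s - r * s - Num.min (dBP b * s) (cap b * s - r * s))) 0.

Definition before (R : realType) (T : finType) (f : T -> R) (tb : T -> nat) : rel T :=
  fun x y => (f y < f x) || ((f x == f y) && (tb x <= tb y))%N.

Definition sorted_by (R : realType) (T : finType) (f : T -> R) (tb : T -> nat)
  (A : {set T}) : seq T := sort (before f tb) (enum A).

Definition bp_block (R : realType) (T : finType) (r s muBP : R) (cB : nat)
  (tbBP : T -> nat) (M0 : {set T}) (bids : T -> bid R) : seq T :=
  take cB (sorted_by (fun t => bp_fee r s (bids t)) tbBP
             [set t in M0 | (r + muBP <= cap (bids t)) && (muBP <= dBP (bids t))]).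

(* Inclusion list of the includer with order j+1 (j : 'I_m), following the
   indicated allocation rule: positions j*cI+1 .. (j+1)*cI of the sorted list. *)
Definition incl_list (R : realType) (T : finType) (r s muBP muCM : R) (cB cI : nat)
  (tbBP tbCM : T -> nat) (M0 : {set T}) (bids : T -> bid R) (j : nat) : seq T :=
  let S := bp_block r s muBP cB tbBP M0 bids in
  take cI (drop (j * cI)
    (sorted_by (fun t => cm_fee r s (bids t)) tbCM
       [set t in M0 | (t \in S) && (muCM * s <= cm_fee r s (bids t))])).

Definition update_bid (R : realType) (T : finType) (bids : T -> bid R) (t : T)
  (b : bid R) : T -> bid R := fun u => if u == t then b else bids u.

From HB Require Import structures.
From mathcomp Require Import all_boot all_order all_algebra.
From mathcomp Require Import reals.
From mathcomp Require Import lra.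
Set Implicit Arguments. Unset Strict Implicit. Unset Printing Implicit Defensive.
Import Order.TTheory GRing.Theory Num.Theory.
Local Open Scope ring_scope.

(* A transaction that is left out can always be re-bid so as to outbid every
   other transaction of M0 both in block producer fee and in committee fee,
   while meeting both cost thresholds.  It then heads the block producer's
   sorted list, so it is in the block, and hence it also heads the list sorted
   by committee fee, so the includer of order 1 lists it. *)

Lemma before_total (R : realType) (T : finType) (f : T -> R) (tb : T -> nat) :
  total (before f tb).
Proof.
move=> x y; rewrite /before.
by case: (ltgtP (f x) (f y)) => [h|h|h]; rewrite ?h ?orbT //= leq_total.
Qed.

Lemma before_gt_fee (R : realType) (T : finType) (f : T -> R) (tb : T -> nat)
    x y : f x < f y -> ~~ before f tb x y.
Proof. by move=> lt_xy; rewrite /before negb_or lt_gtF //= lt_eqF. Qed.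

Lemma sorted_by_strict_max (R : realType) (T : finType) (f : T -> R)
    (tb : T -> nat) (A : {set T}) t :
  t \in A -> {in A, forall u, u != t -> f u < f t} ->
  exists s', sorted_by f tb A = t :: s'.
Proof.
move=> tA t_max; rewrite /sorted_by.
have: sorted (before f tb) (sort (before f tb) (enum A)).
  exact/sort_sorted/before_total.
have: uniq (sort (before f tb) (enum A)) by rewrite sort_uniq enum_uniq.
have: {subset sort (before f tb) (enum A) <= A}.
  by move=> y; rewrite mem_sort mem_enum.
have: t \in sort (before f tb) (enum A) by rewrite mem_sort mem_enum.
case/splitPr=> [[|x s1] s2] sub_A; first by exists s2.
(* the element just before [t] would have to be sorted before it *)
set y := last x s1.
have y_s1 : y \in x :: s1 by exact: mem_last.
rewrite cat_uniq /= => /and3P [_ /norP [t_s1 _] _].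
rewrite cat_path => /and3P [_ /= before_yt _].
have y_neq_t : y != t by apply: contraNneq t_s1 => <-.
have yA : y \in A by apply: sub_A; rewrite mem_cat y_s1.
by rewrite (negbTE (before_gt_fee tb (t_max y yA y_neq_t))) in before_yt.
Qed.

Lemma mem_take_sorted_by_strict_max (R : realType) (T : finType) (f : T -> R)
    (tb : T -> nat) (A : {set T}) t n :
  (0 < n)%N -> t \in A -> {in A, forall u, u != t -> f u < f t} ->
  t \in take n (sorted_by f tb A).
Proof.
move=> n_gt0 tA t_max; have [s' ->] := sorted_by_strict_max tb tA t_max.
by rewrite -(prednK n_gt0) /= mem_head.
Qed.

Lemma bp_fee_le (R : realType) (r s : R) (b : bid R) :
  0 <= dBP b * s -> bp_fee r s b <= dBP b * s.
Proof. by move=> ge0; rewrite /bp_fee ge_max ge_min lexx. Qed.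

Lemma cm_fee_le (R : realType) (r s : R) (b : bid R) :
  0 <= dCM b * s -> cm_fee r s b <= dCM b * s.
Proof. by move=> ge0; rewrite /cm_fee ge_max ge_min lexx. Qed.

Lemma bp_fee_uncapped (R : realType) (r s : R) (b : bid R) :
  0 <= dBP b * s -> dBP b * s <= cap b * s - r * s -> bp_fee r s b = dBP b * s.
Proof. by move=> ge0 le_cap; rewrite /bp_fee min_l // max_l. Qed.

Lemma cm_fee_uncapped (R : realType) (r s : R) (b : bid R) :
  0 <= dCM b * s -> dCM b * s + dBP b * s <= cap b * s - r * s ->
  cm_fee r s b = dCM b * s.
Proof.
move=> ge0 le_cap; have le_bp : dBP b * s <= cap b * s - r * s by lra.
by rewrite /cm_fee (min_l le_bp) min_l ?max_l //; lra.
Qed.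

Lemma ler_sum_mem (R : realType) (T : finType) (A : {set T}) (F : T -> R) u :
  {in A, forall v, 0 <= F v} -> u \in A -> F u <= \sum_(v in A) F v.
Proof.
move=> F_ge0 uA; rewrite (bigD1 u) //= lerDl.
by apply: sumr_ge0 => v /andP [vA _]; apply: F_ge0.
Qed.

Lemma update_bid_other (R : realType) (T : finType) (bids : T -> bid R) t b u :
  u != t -> update_bid bids t b u = bids u.
Proof. by rewrite /update_bid => /negbTE ->. Qed.

Lemma update_bid_self (R : realType) (T : finType) (bids : T -> bid R) t b :
  update_bid bids t b t = b.
Proof. by rewrite /update_bid eqxx. Qed.

Section Outbidding.

Variables (R : realType) (T : finType) (M0 : {set T}) (bids : T -> bid R).
Variables (s r muBP muCM : R).
Hypothesis s_gt0 : 0 < s.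
Hypothesis muBP_ge0 : 0 <= muBP.
Hypothesis muCM_ge0 : 0 <= muCM.
Hypothesis bids_valid : {in M0, forall u, valid_bid (bids u)}.

(* Exceeding the sum of all bids of M0 exceeds each of them; the margin 1
   makes the inequalities strict and clears the cost thresholds. *)
Definition outbid_dBP : R := muBP + 1 + \sum_(v in M0) dBP (bids v).
Definition outbid_dCM : R := muCM + 1 + \sum_(v in M0) dCM (bids v).
Definition outbid : bid R :=
  Bid outbid_dCM outbid_dBP (`|r| + outbid_dCM + outbid_dBP).

Lemma outbid_dBP_ge : muBP + 1 <= outbid_dBP.
Proof. by rewrite /outbid_dBP lerDl; apply: sumr_ge0 => v /bids_valid [_ []]. Qed.

Lemma outbid_dCM_ge : muCM + 1 <= outbid_dCM.
Proof. by rewrite /outbid_dCM lerDl; apply: sumr_ge0 => v /bids_valid []. Qed.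

Lemma dBP_lt_outbid u : u \in M0 -> dBP (bids u) < outbid_dBP.
Proof.
move=> uM; have: dBP (bids u) <= \sum_(v in M0) dBP (bids v).
  by apply: ler_sum_mem uM => v /bids_valid [_ []].
by rewrite /outbid_dBP; have := muBP_ge0; lra.
Qed.

Lemma dCM_lt_outbid u : u \in M0 -> dCM (bids u) < outbid_dCM.
Proof.
move=> uM; have: dCM (bids u) <= \sum_(v in M0) dCM (bids v).
  by apply: ler_sum_mem uM => v /bids_valid [].
by rewrite /outbid_dCM; have := muCM_ge0; lra.
Qed.

Let outbid_dBP_ge0 : 0 <= outbid_dBP.
Proof. by have := outbid_dBP_ge; have := muBP_ge0; lra. Qed.

Let outbid_dCM_ge0 : 0 <= outbid_dCM.
Proof. by have := outbid_dCM_ge; have := muCM_ge0; lra. Qed.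

Lemma outbid_valid : valid_bid outbid.
Proof.
have := outbid_dBP_ge0; have := outbid_dCM_ge0; have := normr_ge0 r.
by rewrite /valid_bid /=; lra.
Qed.

Lemma bp_fee_outbid : bp_fee r s outbid = outbid_dBP * s.
Proof.
apply: bp_fee_uncapped => /=; first exact/mulr_ge0/ltW.
by rewrite -mulrBl ler_pM2r //; have := outbid_dCM_ge0; have := ler_norm r; lra.
Qed.

Lemma cm_fee_outbid : cm_fee r s outbid = outbid_dCM * s.
Proof.
apply: cm_fee_uncapped => /=; first exact/mulr_ge0/ltW.
by rewrite -mulrBl -mulrDl ler_pM2r //; have := ler_norm r; lra.
Qed.

Lemma bp_fee_lt_outbid u : u \in M0 -> bp_fee r s (bids u) < bp_fee r s outbid.
Proof.
move=> uM; have [_ [dBP_ge0 _]] := bids_valid uM.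
rewrite bp_fee_outbid; apply: le_lt_trans (bp_fee_le r (mulr_ge0 dBP_ge0 (ltW s_gt0))) _.
by rewrite ltr_pM2r // dBP_lt_outbid.
Qed.

Lemma cm_fee_lt_outbid u : u \in M0 -> cm_fee r s (bids u) < cm_fee r s outbid.
Proof.
move=> uM; have [dCM_ge0 _] := bids_valid uM.
rewrite cm_fee_outbid; apply: le_lt_trans (cm_fee_le r (mulr_ge0 dCM_ge0 (ltW s_gt0))) _.
by rewrite ltr_pM2r // dCM_lt_outbid.
Qed.

Lemma outbid_bp_eligible : (r + muBP <= cap outbid) && (muBP <= dBP outbid).
Proof.
have := outbid_dBP_ge; have := outbid_dCM_ge0; have := ler_norm r.
by rewrite /= => le_r ge0_dCM ge_dBP; apply/andP; split; lra.
Qed.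

Lemma outbid_cm_eligible : muCM * s <= cm_fee r s outbid.
Proof. by rewrite cm_fee_outbid ler_pM2r //; have := outbid_dCM_ge; lra. Qed.

Variables (t : T) (cB cI : nat) (tbBP tbCM : T -> nat).
Hypothesis t_M0 : t \in M0.

Lemma mem_bp_block_outbid :
  (0 < cB)%N -> t \in bp_block r s muBP cB tbBP M0 (update_bid bids t outbid).
Proof.
move=> cB_gt0; apply: mem_take_sorted_by_strict_max => //.
  by rewrite inE t_M0 update_bid_self outbid_bp_eligible.
move=> u; rewrite inE => /andP [uM _] ut.
by rewrite update_bid_self update_bid_other // bp_fee_lt_outbid.
Qed.

Lemma mem_incl_list_outbid : (0 < cB)%N -> (0 < cI)%N ->
  t \in incl_list r s muBP muCM cB cI tbBP tbCM M0 (update_bid bids t outbid) 0.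
Proof.
move=> cB_gt0 cI_gt0; rewrite /incl_list mul0n drop0.
apply: mem_take_sorted_by_strict_max => //.
  by rewrite inE t_M0 mem_bp_block_outbid // update_bid_self outbid_cm_eligible.
move=> u; rewrite inE => /andP [uM _] ut.
by rewrite update_bid_self update_bid_other // cm_fee_lt_outbid.
Qed.

End Outbidding.

Theorem mainTheorem2 (R : realType) (T : finType) (M0 : {set T})
  (bids : T -> bid R) (s r muBP muCM : R) (m cI cB : nat)
  (tbBP tbCM : T -> nat) :
  injective tbBP -> injective tbCM ->
  0 < s -> 0 <= muBP -> 0 <= muCM ->
  (forall u, u \in M0 -> valid_bid (bids u)) ->
  (0 < m)%N -> (0 < cI)%N -> (0 < cB)%N ->
  (cB < #|M0|)%N ->
  forall t, t \in M0 ->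
  t \notin bp_block r s muBP cB tbBP M0 bids ->
  exists b : bid R, valid_bid b /\
    let bids' := update_bid bids t b in
    (exists j : 'I_m, t \in incl_list r s muBP muCM cB cI tbBP tbCM M0 bids' j) /\
    t \in bp_block r s muBP cB tbBP M0 bids'.
Proof.
move=> _ _ s_gt0 muBP_ge0 muCM_ge0 bids_valid m_gt0 cI_gt0 cB_gt0 _ t t_M0 _.
exists (outbid M0 bids r muBP muCM).
split; first exact: outbid_valid.
split; first exists (Ordinal m_gt0).
  exact: (mem_incl_list_outbid r s_gt0 muBP_ge0 muCM_ge0 bids_valid _ _ t_M0).
exact: (mem_bp_block_outbid r s_gt0 muBP_ge0 muCM_ge0 bids_valid _ t_M0).
Qed.
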